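(* Let $(\mathbb{X},A)$ be a quantum graph. Then the eigenspaces of $D_A$ and of $D^A$ are invariant under the action of $\operatorname{Qut}(\mathbb{X},A)$; that is, the orthogonal projections onto the eigenspaces of $D_A$ (and of $D^A$) are intertwiners of the fundamental representation $U$ of $\operatorname{Qut}(\mathbb{X},A)$, i.e. they commute with $U$.
   Context: A finite quantum set $\mathbb{X}$ is a finite-dimensional C*-algebra $C(\mathbb{X})$ with its unique tracial positive functional $\psi$ such that, for $\langle x,y\rangle=\psi(x^*y)$ on $\ell^2(\mathbb{X}):=C(\mathbb{X})$, the multiplication $m$ satisfies $mm^*=\mathrm{id}$; $\eta$ is the unit. A quantum graph is $(\mathbb{X},A)$ with $A\bullet A=A=\bar A$, where $A\bullet B=m(A\otimes B)m^*$ and $\bar Af=(A(f^* ))^*$. The degree operators are $D_A=m(A\eta\otimes I_{\ell^2(\mathbb{X})})$ and $D^A=m(A^*\eta\otimes I_{\ell^2(\mathbb{X})})$ (i.e. left multiplication by $A\eta$, resp. $A^*\eta$). $\operatorname{Qut}(\mathbb{X},A)$ is the compact matrix quantum group whose Hopf $*$-algebra is the universal $*$-algebra generated by the entries of a matrix $U$ (its fundamental representation, acting on $\ell^2(\mathbb{X})$) subject to $U$ unitary, $m(U\otimes U)=Um$, $U\eta=\eta$, $UA=AU$. An operator $T$ on $\ell^2(\mathbb{X})$ is an intertwiner of $U$ if $(T\otimes1)U=U(T\otimes1)$. *)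

From HB Require Import structures.
From mathcomp Require Import all_boot all_order all_algebra.
Set Implicit Arguments. Unset Strict Implicit. Unset Printing Implicit Defensive.
Import Order.TTheory GRing.Theory Num.Theory.
Local Open Scope ring_scope.

(* Coordinates: l^2(X) = C(X) is identified with C^I through a basis
   (e_i)_{i : I} which is ORTHONORMAL for <x,y> = psi(x^* y). *)
Section QuantumSets.
Variables (C : numClosedFieldType) (I : finType).

Definition vec := I -> C.
Definition op := I -> I -> C.

Definition app (T : op) (x : vec) : vec := fun i => \sum_j T i j * x j.
Definition comp (S T : op) : op := fun i k => \sum_j S i j * T j k.
Definition adj (T : op) : op := fun i j => (T j i)^*.
Definition inner (x y : vec) : C := \sum_i (x i)^* * y i.

(* multiplication m : l2 (x) l2 -> l2 with m (e_a (x) e_b) = \sum_c mu c a b e_c *)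
Definition qmul (mu : I -> I -> I -> C) (x y : vec) : vec :=
  fun c => \sum_a \sum_b mu c a b * x a * y b.
Definition qstar (J : op) (x : vec) : vec := fun b => \sum_a J b a * (x a)^*.
Definition qfun (psi : vec) (x : vec) : C := \sum_i psi i * x i.

(* (C^I, qmul, qstar, unit eta) is a finite quantum set with functional psi:
   a unital *-algebra, psi tracial positive, <x,y> = psi(x^* y) (the standard
   inner product in our orthonormal coordinates) and m m^* = id. *)
Definition quantum_set (mu : I -> I -> I -> C) (J : op) (eta psi : vec) : Prop :=
  (forall x y z, qmul mu (qmul mu x y) z = qmul mu x (qmul mu y z)) /\
  (forall x, qmul mu eta x = x /\ qmul mu x eta = x) /\
  (forall x, qstar J (qstar J x) = x) /\
  (forall x y, qstar J (qmul mu x y) = qmul mu (qstar J y) (qstar J x)) /\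
  (forall x y, inner x y = qfun psi (qmul mu (qstar J x) y)) /\
  (forall x y, qfun psi (qmul mu x y) = qfun psi (qmul mu y x)) /\
  (forall x, 0 <= qfun psi (qmul mu (qstar J x) x)) /\
  (* m m^* = id *)
  (forall c d, \sum_a \sum_b mu c a b * (mu d a b)^* = (c == d)%:R).

(* Schur product A . B = m (A (x) B) m^* *)
Definition schur (mu : I -> I -> I -> C) (A B : op) : op :=
  fun c d => \sum_a \sum_b \sum_a' \sum_b'
               mu c a b * A a a' * B b b' * (mu d a' b')^*.

Definition quantum_graph (mu : I -> I -> I -> C) (J : op) (A : op) : Prop :=
  schur mu A A = A /\ (forall x, qstar J (app A (qstar J x)) = app A x).

Definition lmul (mu : I -> I -> I -> C) (v : vec) : op :=
  fun c b => \sum_a mu c a b * v a.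

Definition degree_out (mu : I -> I -> I -> C) (eta : vec) (A : op) : op :=
  lmul mu (app A eta).
Definition degree_in (mu : I -> I -> I -> C) (eta : vec) (A : op) : op :=
  lmul mu (app (adj A) eta).

Definition is_eigenproj (D : op) (l : C) (P : op) : Prop :=
  [/\ comp P P = P, adj P = P &
      forall x, (exists y, x = app P y) <-> app D x = (fun i => l * x i)].

Definition star_alg (B : algType C) (st : B -> B) : Prop :=
  [/\ (forall x, st (st x) = x),
      (forall x y, st (x + y) = st x + st y),
      (forall x y, st (x * y) = st y * st x) &
      (forall (a : C) x, st (a *: x) = a^* *: st x)].

(* u = (u i j) in M_I(B) satisfies the defining relations of Qut(X,A):
   U unitary, m (U (x) U) = U m (with U (x) U = U_13 U_23), U eta = eta,
   U A = A U. *)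
Definition qut_rep (mu : I -> I -> I -> C) (eta : vec) (A : op)
    (B : algType C) (st : B -> B) (u : I -> I -> B) : Prop :=
  [/\ (forall i j, \sum_k u i k * st (u j k) = (i == j)%:R),
      (forall i j, \sum_k st (u k i) * u k j = (i == j)%:R),
      (forall c a' b', \sum_a \sum_b mu c a b *: (u a a' * u b b')
                       = \sum_d mu d a' b' *: u c d),
      (forall a, \sum_b eta b *: u a b = (eta a)%:A) &
      (forall i j, \sum_k A k j *: u i k = \sum_k A i k *: u k j)].

(* (T (x) 1) U = U (T (x) 1) *)
Definition intertwiner (T : op) (B : algType C) (u : I -> I -> B) : Prop :=
  forall i j, \sum_k T i k *: u k j = \sum_k T k j *: u i k.

End QuantumSets.

(* A commutes with U by definition of Qut(X,A), and since U is unitary every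
   operator commuting with U also commutes with U^*, hence (taking adjoints) so
   does A^*. As U fixes eta, it fixes A eta and A^* eta, and since U respects the
   multiplication, left multiplication by a U-fixed vector commutes with U; so
   D = D_A or D^A commutes with U and U^*. If P is the orthogonal projection onto
   ker (D - l), then P - 1 = R (D - l) for some R, and for W = U, U^* we get
   (P - 1) W P = R W (D - l) P = 0, i.e. W P = P W P. The adjoint of
   U^* P = P U^* P reads P U = P U P = U P. *)

From Stdlib Require Import FunctionalExtensionality.
From Pilot Require Import Defs.
From HB Require Import structures.
From mathcomp Require Import all_boot all_order all_algebra.
Import Order.TTheory GRing.Theory Num.Theory.
Local Open Scope ring_scope.
Set Implicit Arguments. Unset Strict Implicit.

Lemma funext2 (T1 T2 T3 : Type) (f g : T1 -> T2 -> T3) :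
  (forall x y, f x y = g x y) -> f = g.
Proof. by move=> fg; do 2!apply: functional_extensionality => ?. Qed.

Section Operators.
Variables (C : numClosedFieldType) (I : finType).
Implicit Types (S T M N : op C I) (x : vec C I).

Definition op0 : op C I := fun _ _ => 0.

Definition mx_of_op T : 'M[C]_#|I| := \matrix_(i, j) T (enum_val i) (enum_val j).
Definition op_of_mx (A : 'M[C]_#|I|) : op C I :=
  fun a b => A (enum_rank a) (enum_rank b).

Lemma mx_of_opK : cancel mx_of_op op_of_mx.
Proof. by move=> T; apply: funext2 => a b; rewrite /op_of_mx mxE !enum_rankK. Qed.

Lemma op_of_mxK : cancel op_of_mx mx_of_op.
Proof. by move=> A; apply/matrixP => i j; rewrite mxE /op_of_mx !enum_valK. Qed.

Lemma op_of_mxM (A A' : 'M[C]_#|I|) :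
  op_of_mx (A *m A') = Defs.comp (op_of_mx A) (op_of_mx A').
Proof.
apply: funext2 => a b.
rewrite /op_of_mx /Defs.comp mxE [RHS](big_enum_val (A := predT)) /=.
by apply: eq_bigr => k _; rewrite !enum_valK.
Qed.

Lemma op_of_mx0 : op_of_mx 0 = op0.
Proof. by apply: funext2 => a b; rewrite /op_of_mx mxE. Qed.

(* ker M <= ker N makes N *m cokermx M vanish: the rows of N lie in the row space of M. *)
Lemma comp_factor_ker M N :
  (forall X, Defs.comp M X = op0 -> Defs.comp N X = op0) ->
  exists R, N = Defs.comp R M.
Proof.
move=> kerMN; pose Mm := mx_of_op M; pose Nm := mx_of_op N.
have NsubM : (Nm <= Mm)%MS.
  rewrite submxE; apply/eqP/(can_inj op_of_mxK).
  rewrite op_of_mxM mx_of_opK op_of_mx0; apply: kerMN.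
  by rewrite -[M]mx_of_opK -op_of_mxM mulmx_coker op_of_mx0.
exists (op_of_mx (Nm *m pinvmx Mm)).
by rewrite -[M]mx_of_opK -op_of_mxM mulmxKpV // mx_of_opK.
Qed.

Definition shift T (l : C) : op C I := fun i j => T i j - l * (i == j)%:R.

Lemma app_comp S T x : app S (app T x) = app (Defs.comp S T) x.
Proof.
apply: functional_extensionality => i; rewrite /app /Defs.comp.
under eq_bigr do rewrite mulr_sumr.
rewrite exchange_big; apply: eq_bigr => k _; rewrite mulr_suml.
by apply: eq_bigr => j _; rewrite mulrA.
Qed.

Lemma app_shift T l x : app (shift T l) x = fun i => app T x i - l * x i.
Proof.
apply: functional_extensionality => i; rewrite /app /shift.
under eq_bigr do rewrite mulrBl.
rewrite sumrB; congr (_ - _); rewrite (bigD1 i) //= eqxx mulr1 big1 ?addr0 // => k.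
by rewrite eq_sym => /negbTE ->; rewrite mulr0 mul0r.
Qed.

Section EigenProjection.
Variables (D P : op C I) (l : C).
Hypothesis eigP : is_eigenproj D l P.

Lemma eigenproj_shift_comp : Defs.comp (shift D l) P = op0.
Proof.
case: eigP => _ _ rangeP; apply: funext2 => i k.
have colP : exists y, (fun j => P j k) = app P y.
  exists (fun j => (j == k)%:R); apply: functional_extensionality => j.
  rewrite /app (bigD1 k) //= eqxx mulr1 big1 ?addr0 // => m /negbTE ->.
  by rewrite mulr0.
have eigcol := (rangeP _).1 colP.
by rewrite -[LHS]/(app (shift D l) _ i) app_shift eigcol subrr.
Qed.

Lemma eigenproj_ker X :
  Defs.comp (shift D l) X = op0 -> Defs.comp (shift P 1) X = op0.
Proof.
case: eigP => idemP _ rangeP kerX; apply: funext2 => i k.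
pose x j := X j k.
have shift_x : app (shift D l) x = (fun _ => 0) := congr1 (fun f j => f j k) kerX.
have eigx : app D x = (fun j => l * x j).
  apply: functional_extensionality => j; apply/eqP; rewrite -subr_eq0.
  by move: (congr1 (fun f => f j) shift_x); rewrite app_shift /= => ->.
have [y defx] := (rangeP x).2 eigx.
have Px : app P x = x by rewrite defx app_comp idemP.
by rewrite -[LHS]/(app (shift P 1) x i) app_shift Px mul1r subrr.
Qed.

Lemma eigenproj_factor : exists R, shift P 1 = Defs.comp R (shift D l).
Proof. exact/comp_factor_ker/eigenproj_ker. Qed.

End EigenProjection.
End Operators.
Arguments op0 {C I}.

Section BMatrices.
Variables (C : numClosedFieldType) (I : finType) (B : algType C).

Definition bmx := I -> I -> B.

Definition mulB (X Y : bmx) : bmx := fun i k => \sum_j X i j * Y j k.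
Definition oneB : bmx := fun i j => (i == j)%:R.
Definition zeroB : bmx := fun _ _ => 0.
Definition liftB (T : op C I) : bmx := fun i j => (T i j)%:A.

Lemma mulBA X Y Z : mulB (mulB X Y) Z = mulB X (mulB Y Z).
Proof.
apply: funext2 => i k; rewrite /mulB; under eq_bigr do rewrite mulr_suml.
rewrite exchange_big; apply: eq_bigr => j _; rewrite mulr_sumr.
by apply: eq_bigr => m _; rewrite mulrA.
Qed.

Lemma mul1B X : mulB oneB X = X.
Proof.
apply: funext2 => i j; rewrite /mulB /oneB (bigD1 i) //= eqxx mul1r big1 ?addr0 // => k.
by rewrite eq_sym => /negbTE ->; rewrite mul0r.
Qed.

Lemma mulB1 X : mulB X oneB = X.
Proof.
apply: funext2 => i j; rewrite /mulB /oneB (bigD1 j) //= eqxx mulr1 big1 ?addr0 // => k.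
by move=> /negbTE ->; rewrite mulr0.
Qed.

Lemma mulB0 X : mulB X zeroB = zeroB.
Proof. by apply: funext2 => i j; rewrite /mulB big1 // => k _; rewrite mulr0. Qed.

Lemma liftB0 : liftB op0 = zeroB.
Proof. by apply: funext2 => i j; rewrite /liftB scale0r. Qed.

Lemma liftB_comp S T : liftB (Defs.comp S T) = mulB (liftB S) (liftB T).
Proof.
apply: funext2 => i k; rewrite /liftB /Defs.comp /mulB scaler_suml.
by apply: eq_bigr => j _; rewrite mulr_algl scalerA.
Qed.

Lemma mulB_liftB_shiftl T l X :
  mulB (liftB (shift T l)) X = fun i j => mulB (liftB T) X i j - l *: X i j.
Proof.
apply: funext2 => i j; rewrite /mulB /liftB /shift.
under eq_bigr do rewrite scalerBl mulrBl.
rewrite sumrB; congr (_ - _).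
rewrite (bigD1 i) //= eqxx mulr1 big1 ?addr0 ?mulr_algl // => k.
by rewrite eq_sym => /negbTE ->; rewrite mulr0 scale0r mul0r.
Qed.

Lemma mulB_liftB_shiftr T l X :
  mulB X (liftB (shift T l)) = fun i j => mulB X (liftB T) i j - l *: X i j.
Proof.
apply: funext2 => i j; rewrite /mulB /liftB /shift.
under eq_bigr do rewrite scalerBl mulrBr.
rewrite sumrB; congr (_ - _).
rewrite (bigD1 j) //= eqxx mulr1 big1 ?addr0 ?mulr_algr // => k.
by move=> /negbTE ->; rewrite mulr0 scale0r mulr0.
Qed.

Lemma intertwinerE T u : intertwiner T u <-> mulB (liftB T) u = mulB u (liftB T).
Proof.
have -> : mulB (liftB T) u = fun i j => \sum_k T i k *: u k j.
  by apply: funext2 => i j; apply: eq_bigr => k _; rewrite mulr_algl.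
have -> : mulB u (liftB T) = fun i j => \sum_k T k j *: u i k.
  by apply: funext2 => i j; apply: eq_bigr => k _; rewrite mulr_algr.
split=> [h | h i j]; first by apply: funext2 => i j; apply: h.
exact: (congr1 (fun f => f i j) h).
Qed.

Lemma commute_liftB_shift T l X :
  mulB (liftB T) X = mulB X (liftB T) ->
  mulB (liftB (shift T l)) X = mulB X (liftB (shift T l)).
Proof. by move=> commTX; rewrite mulB_liftB_shiftl mulB_liftB_shiftr commTX. Qed.

Lemma mulB_proj_absorb M P R W :
  Defs.comp M P = op0 -> shift P 1 = Defs.comp R M ->
  mulB (liftB M) W = mulB W (liftB M) ->
  mulB W (liftB P) = mulB (liftB P) (mulB W (liftB P)).
Proof.
move=> MP0 defR commMW.
have : mulB (liftB (shift P 1)) (mulB W (liftB P)) = zeroB.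
  rewrite defR liftB_comp mulBA -[mulB (liftB M) _]mulBA commMW mulBA.
  by rewrite -liftB_comp MP0 liftB0 !mulB0.
rewrite mulB_liftB_shiftl => h; apply: funext2 => i j.
by have /eqP := congr1 (fun f => f i j) h; rewrite scale1r subr_eq0 => /eqP.
Qed.

End BMatrices.
Arguments oneB {C I B}.
Arguments zeroB {C I B}.
Arguments liftB {C I B} T.

Section StarAlgebra.
Variables (C : numClosedFieldType) (I : finType) (B : algType C) (st : B -> B).
Hypothesis starB : star_alg st.

Lemma star0 : st 0 = 0.
Proof.
case: starB => _ stD _ _; apply: (addrI (st 0)).
by rewrite -stD !addr0.
Qed.

Lemma star_sum (F : I -> B) : st (\sum_k F k) = \sum_k st (F k).
Proof.
case: starB => _ stD _ _.
by apply: (big_ind2 (fun x y => st x = y)) => [|x x' y y' <- <-|]; rewrite ?star0.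
Qed.

Lemma star1 : st 1 = 1.
Proof.
case: starB => stK _ stM _.
by have := stM (st 1) 1; rewrite mulr1 stK mulr1 => <-.
Qed.

Lemma star_scalar (a : C) : st a%:A = a^*%:A.
Proof. by case: starB => _ _ _ stZ; rewrite stZ star1. Qed.

Definition adjB (X : bmx I B) : bmx I B := fun i j => st (X j i).

Lemma adjBK X : adjB (adjB X) = X.
Proof. by case: starB => stK _ _ _; apply: funext2 => i j; rewrite /adjB stK. Qed.

Lemma adjB_mul X Y : adjB (mulB X Y) = mulB (adjB Y) (adjB X).
Proof.
case: starB => _ _ stM _; apply: funext2 => i j.
by rewrite /adjB /mulB star_sum; apply: eq_bigr => k _; rewrite stM.
Qed.

Lemma adjB_liftB T : adjB (liftB T) = liftB (adj T).
Proof. by apply: funext2 => i j; rewrite /adjB /liftB star_scalar. Qed.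

Variable u : bmx I B.
Hypotheses (u_coisometry : mulB u (adjB u) = oneB)
           (u_isometry : mulB (adjB u) u = oneB).

Lemma commute_adjB T :
  mulB (liftB T) u = mulB u (liftB T) ->
  mulB (liftB T) (adjB u) = mulB (adjB u) (liftB T).
Proof.
move=> commTu; rewrite -[RHS]mulB1 -u_coisometry -mulBA.
rewrite [mulB (mulB _ (liftB T)) u]mulBA commTu -[mulB (adjB u) (mulB u _)]mulBA.
by rewrite u_isometry mul1B.
Qed.

Lemma intertwiner_adj T : intertwiner T u -> intertwiner (adj T) u.
Proof.
move=> /intertwinerE /commute_adjB commTu'; apply/intertwinerE.
have := congr1 adjB commTu'; rewrite !adjB_mul adjBK adjB_liftB.
by move->.
Qed.

Lemma eigenproj_intertwiner D l P :
  intertwiner D u -> is_eigenproj D l P -> intertwiner P u.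
Proof.
move=> /intertwinerE commDu eigP; have [R defR] := eigenproj_factor eigP.
have absorb (W : bmx I B) : mulB (liftB D) W = mulB W (liftB D) ->
    mulB W (liftB P) = mulB (liftB P) (mulB W (liftB P)).
  move=> commDW; apply: mulB_proj_absorb (eigenproj_shift_comp eigP) defR _.
  exact: commute_liftB_shift.
have uP := absorb u commDu.
have u'P := absorb _ (commute_adjB commDu).
case: eigP => _ adjP _; apply/intertwinerE.
have Pu := congr1 adjB u'P.
by rewrite !adjB_mul adjBK adjB_liftB adjP mulBA -uP in Pu.
Qed.

End StarAlgebra.

Section QuantumAutomorphisms.
Variables (C : numClosedFieldType) (I : finType) (B : algType C) (u : bmx I B).

Definition fixes_vec (v : vec C I) : Prop :=
  forall a, \sum_b v b *: u a b = (v a)%:A.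

Definition respects_qmul (mu : I -> I -> I -> C) : Prop :=
  forall c a' b', \sum_a \sum_b mu c a b *: (u a a' * u b b')
                  = \sum_d mu d a' b' *: u c d.

Definition col_op (v : vec C I) : op C I := fun i _ => v i.

Lemma fixes_vecE v : fixes_vec v <-> mulB u (liftB (col_op v)) = liftB (col_op v).
Proof.
have -> : mulB u (liftB (col_op v)) = fun a _ => \sum_b v b *: u a b.
  by apply: funext2 => a j; apply: eq_bigr => b _; rewrite mulr_algr.
split=> [fix_v | fix_v a]; first by apply: funext2 => a j; apply: fix_v.
exact: (congr1 (fun f => f a a) fix_v).
Qed.

Lemma intertwiner_app_fixed T v :
  intertwiner T u -> fixes_vec v -> fixes_vec (app T v).
Proof.
move=> /intertwinerE commTu /fixes_vecE fix_v; apply/fixes_vecE.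
rewrite -[col_op (app T v)]/(Defs.comp T (col_op v)) liftB_comp.
by rewrite -mulBA -commTu mulBA fix_v.
Qed.

Lemma intertwiner_lmul mu v :
  respects_qmul mu -> fixes_vec v -> intertwiner (lmul mu v) u.
Proof.
move=> mul_u fix_v i j; rewrite /lmul.
transitivity (\sum_a \sum_b (mu i a b * v a) *: u b j).
  by under eq_bigr do rewrite scaler_suml; rewrite exchange_big.
symmetry; under eq_bigr do rewrite scaler_suml.
rewrite exchange_big.
transitivity (\sum_a v a *: \sum_k mu k a j *: u i k).
  apply: eq_bigr => a _; rewrite scaler_sumr; apply: eq_bigr => k _.
  by rewrite scalerA mulrC.
under eq_bigr do rewrite -mul_u scaler_sumr.
rewrite exchange_big; apply: eq_bigr => a _.
under eq_bigr do rewrite scaler_sumr.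
rewrite exchange_big; apply: eq_bigr => b _.
transitivity (mu i a b *: ((\sum_k v k *: u a k) * u b j)).
  rewrite mulr_suml scaler_sumr; apply: eq_bigr => k _.
  by rewrite -scalerAl !scalerA mulrC.
by rewrite fix_v mulr_algl scalerA.
Qed.

End QuantumAutomorphisms.

Unset Implicit Arguments.
Theorem proposition2p5 (C : numClosedFieldType) (I : finType)
  (mu : I -> I -> I -> C) (J : op C I) (eta psi : vec C I) (A : op C I) :
  quantum_set mu J eta psi -> quantum_graph mu J A ->
  forall (B : algType C) (st : B -> B) (u : I -> I -> B),
    star_alg st -> qut_rep mu eta A st u ->
    (forall (l : C) (P : op C I),
        is_eigenproj (degree_out mu eta A) l P -> intertwiner P u) /\
    (forall (l : C) (P : op C I),
        is_eigenproj (degree_in mu eta A) l P -> intertwiner P u).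
Proof.
(* Only the relations of Qut(X,A) are used, not the quantum set and graph axioms. *)
move=> _ _ B st u starB [u_coisometry u_isometry mul_u eta_u A_u].
have uu' : mulB u (adjB st u) = oneB by apply: funext2.
have u'u : mulB (adjB st u) u = oneB by apply: funext2.
have A_int : intertwiner A u by move=> i j; rewrite A_u.
have A'_int := intertwiner_adj starB uu' u'u A_int.
split=> l P; apply: (eigenproj_intertwiner starB uu' u'u).
  by apply: intertwiner_lmul mul_u _; apply: intertwiner_app_fixed.
by apply: intertwiner_lmul mul_u _; apply: intertwiner_app_fixed.
Qed.
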